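(* In the stochastic opinion dynamics described below, for every agent $i$, almost surely $\psi_{i,t}=0$ for infinitely many $t$ and $\psi_{i,t}=1$ for infinitely many $t$.
   Context: Let $A=(a_{i,j})$ be a symmetric $n\times n$ matrix with nonnegative entries, the weighted adjacency matrix of an undirected graph $G$ on $\{1,\dots,n\}$ (self-loops allowed) that is connected and not bipartite; let $\deg(i)=\sum_j a_{i,j}$. Each agent $i$ has a bias parameter $\gamma_i>0$, and $\mathrm{diag}(\gamma_1,\dots,\gamma_n)\neq I$. Define $f(\mu,\gamma)=\frac{\gamma\mu}{1+(\gamma-1)\mu}$ for $\mu\in[0,1]$, and for $\beta\in[0,1]^n$ let $\mu_i(\beta)=\frac{1}{\deg(i)}\sum_j a_{i,j}\beta_j$. Dynamics: $\beta_i(1)\in(0,1)$ are given initial values. For each $t\ge1$, conditionally on the history $\mathcal{H}_t$ (all declarations up to time $t$), the declarations $\psi_{i,t+1}\in\{0,1\}$, $i=1,\dots,n$, are independent with $\mathbb{P}[\psi_{i,t+1}=1\mid\mathcal{H}_t]=f(\mu_i(\beta(t)),\gamma_i)$, and $\beta_i(t+1)=\frac{t}{t+1}\beta_i(t)+\frac{1}{t+1}\psi_{i,t+1}$. *)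

From HB Require Import structures.
From mathcomp Require Import all_boot all_order all_algebra.
From mathcomp Require Import all_classical all_reals all_analysis.
Set Implicit Arguments. Unset Strict Implicit. Unset Printing Implicit Defensive.
Import Order.TTheory GRing.Theory Num.Theory.
Local Open Scope ring_scope.

Section Defs.
Variable R : realType.
Variable n : nat.

Definition adj (A : 'M[R]_n) : rel 'I_n := fun i j => 0 < A i j.

Definition graph_connected (A : 'M[R]_n) : Prop :=
  forall i j : 'I_n, connect (adj A) i j.

(* bipartite: a 2-colouring such that every edge (self-loops included)
   joins vertices of different colours *)
Definition graph_bipartite (A : 'M[R]_n) : Prop :=
  exists c : 'I_n -> bool, forall i j, 0 < A i j -> c i != c j.

Definition deg (A : 'M[R]_n) (i : 'I_n) : R := \sum_j A i j.

Definition mu (A : 'M[R]_n) (b : 'I_n -> R) (i : 'I_n) : R :=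
  (deg A i)^-1 * \sum_j A i j * b j.

Definition fbias (m g : R) : R := g * m / (1 + (g - 1) * m).

(* Deterministic empirical averages along a declaration path x
   (x t i = psi_{i,t}, only t >= 2 used):
   beta_seq b1 x k = beta(k+1); beta(1) = b1,
   beta(k+2) = (k+1)/(k+2) beta(k+1) + 1/(k+2) psi_{k+2}. *)
Fixpoint beta_seq (b1 : 'I_n -> R) (x : nat -> 'I_n -> bool) (k : nat)
  : 'I_n -> R :=
  match k with
  | 0 => b1
  | k'.+1 => fun i => (k'.+1%:R / k'.+2%:R) * beta_seq b1 x k' i
                      + (k'.+2%:R)^-1 * (x k'.+2 i)%:R
  end.

(* probability that agents declare the values x (k+2) i at time k+2, given
   the history encoded in x up to time k+1 *)
Definition step_prob (A : 'M[R]_n) (gamma : 'I_n -> R) (b1 : 'I_n -> R)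
  (x : nat -> 'I_n -> bool) (k : nat) : R :=
  \prod_(i < n)
    (let p := fbias (mu A (beta_seq b1 x k) i) (gamma i) in
     if x k.+2 i then p else 1 - p).

End Defs.

(* As beta(t) is an empirical average started in (0,1), every beta_j(t), hence
   mu_i(beta(t)) and both f and 1 - f, stay above c/t for some c > 0.  By the chain
   rule for the law of the declarations, the probability that agent i declares the
   same value b at all times in [N, M) is at most the product of the 1 - c/t over
   these times.  This product tends to 0: for K >= 1/c, (1 - c/t)^K <= t/(t+1), so its
   K-th power telescopes to N/M.  Hence each event "psi_{i,t} = b for all t >= N" is
   null, and so is their countable union. *)

From HB Require Import structures.
From mathcomp Require Import all_boot all_order all_algebra.
From mathcomp Require Import all_classical all_reals all_analysis.
From mathcomp Require Import ring lra.

Set Implicit Arguments.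
Unset Strict Implicit.
Unset Printing Implicit Defensive.

Import Order.TTheory GRing.Theory Num.Theory.
Local Open Scope ring_scope.
Local Open Scope classical_set_scope.

Lemma one_subX_mulD_le1 (R : realFieldType) (a : R) (K : nat) :
  0 <= a <= 1 -> (1 - a) ^+ K * (1 + K%:R * a) <= 1.
Proof.
move=> /andP[a0 a1]; elim: K => [|K IH]; first by rewrite mul0r addr0 mulr1.
have aK0 : 0 <= (1 - a) ^+ K * (K.+1%:R * a ^+ 2).
  by rewrite mulr_ge0 ?exprn_ge0 ?mulr_ge0 ?sqr_ge0 // subr_ge0.
have -> : (1 - a) ^+ K.+1 * (1 + K.+1%:R * a) =
    (1 - a) ^+ K * (1 + K%:R * a) - (1 - a) ^+ K * (K.+1%:R * a ^+ 2).
  by rewrite exprS -natr1; ring.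
lra.
Qed.

Lemma one_sub_divX_le (R : realFieldType) (c : R) (K s : nat) :
  0 <= c <= 1 -> 1 <= K%:R * c ->
  (1 - c / s.+1%:R) ^+ K <= s.+1%:R / s.+2%:R.
Proof.
move=> /andP[c0 c1] Kc.
have s0 : 0 < s.+1%:R :> R by rewrite ltr0n.
set a := c / s.+1%:R.
have /andP[a0 a1] : 0 <= a <= 1.
  by rewrite /a divr_ge0 ?(ltW s0) //= ler_pdivrMr // mul1r (le_trans c1) ?ler1n.
have Ka : 1 <= K%:R * a * s.+1%:R by rewrite -mulrA /a mulfVK ?gt_eqF.
have := one_subX_mulD_le1 K (introT andP (conj a0 a1)).
have : 0 <= (1 - a) ^+ K by rewrite exprn_ge0 // subr_ge0.
rewrite -natr1 ler_pdivlMr ?ltr_wpDl //; set X := (1 - a) ^+ K => X0 XKa.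
have : 0 <= X * (K%:R * a * s.+1%:R - 1) by rewrite mulr_ge0 // subr_ge0.
nra.
Qed.

Lemma prod_succ_ratio (R : numFieldType) (N M : nat) : (N <= M)%N ->
  \prod_(N <= s < M) (s.+1%:R / s.+2%:R) = N.+1%:R / M.+1%:R :> R.
Proof.
move=> /subnKC <-; elim: (M - N)%N => [|k IH].
  by rewrite addn0 big_geq // divff // pnatr_eq0.
rewrite addnS big_nat_recr ?leq_addr //= IH.
by rewrite mulrA mulfVK // pnatr_eq0.
Qed.

Lemma harmonic_prod_bound_eq0 (R : archiFieldType) (c r : R) (N : nat) :
  0 < c <= 1 -> 0 <= r ->
  (forall M, (N <= M)%N -> r <= \prod_(N <= s < M) (1 - c / s.+1%:R)) -> r = 0.
Proof.
move=> /andP[c0 c1] r0 r_le.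
pose K := Num.bound c^-1.
have Kc : 1 <= K%:R * c.
  by rewrite -ler_pdivrMr // div1r ltW // archi_boundP // invr_ge0 ltW.
have rK M : (N <= M)%N -> r ^+ K <= N.+1%:R / M.+1%:R.
  move=> NM; apply: (le_trans (y := (\prod_(N <= s < M) (1 - c / s.+1%:R)) ^+ K)).
    by rewrite lerXn2r ?nnegrE ?r_le // (le_trans r0) ?r_le.
  rewrite -prod_succ_ratio // -prodrXl; apply: ler_prod => s _.
  rewrite one_sub_divX_le ?(ltW c0) ?c1 // andbT exprn_ge0 // subr_ge0.
  by rewrite ler_pdivrMr ?ltr0n // mul1r (le_trans c1) ?ler1n.
suff /eqP : r ^+ K = 0 by rewrite expf_eq0 => /andP[_ /eqP].
apply/eqP; rewrite eq_le exprn_ge0 // andbT leNgt; apply/negP => rK0.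
pose M := (N + Num.bound (N.+1%:R / r ^+ K))%N.
have NM : N.+1%:R < r ^+ K * M.+1%:R.
  rewrite mulrC -ltr_pdivrMr //; apply: lt_le_trans (archi_boundP _) _.
    by rewrite divr_ge0 // ltW.
  by rewrite ler_nat /M -addSn leq_addl.
by move: (rK M (leq_addr _ _)); rewrite ler_pdivlMr ?ltr0n // leNgt NM.
Qed.

Lemma exists_margin (R : realFieldType) (I : finType) (b : I -> R) :
  (forall j, 0 < b j < 1) -> exists2 lo, 0 < lo & forall j, lo <= b j <= 1 - lo.
Proof.
move=> b01; exists (\big[Num.min/1]_j Num.min (b j) (1 - b j)) => [|j].
  by apply: lt_bigmin => // j _; rewrite lt_min subr_gt0.
have := bigmin_le 1 j (fun j => Num.min (b j) (1 - b j)).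
by rewrite le_min => /andP[lo_b lo_1b]; rewrite lo_b /= lerBrDl -lerBrDr.
Qed.

Definition bern (R : pzRingType) (p : R) (v : bool) : R := if v then p else 1 - p.

Lemma bern_le (R : realDomainType) (p e : R) (v : bool) :
  e <= p <= 1 - e -> bern p v <= 1 - e.
Proof. by case: v => /andP[? ?] /=; lra. Qed.

Lemma sum_prod_bern_marginal (R : comRingType) (I : finType) (p : I -> R)
    (i : I) (Q : pred bool) :
  \sum_(y : {ffun I -> bool} | Q (y i)) \prod_j bern (p j) (y j) =
  \sum_(v | Q v) bern (p i) v.
Proof.
(* Zeroing the forbidden values of y i removes the constraint, and the sum factorizes. *)
pose w j v := if (j == i) && ~~ Q v then 0 else bern (p j) v.
have bern_sum j : \sum_v bern (p j) v = 1 by rewrite big_bool /= subrKC.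
transitivity (\sum_(y : {ffun I -> bool}) \prod_j w j (y j)).
  rewrite big_mkcond; apply: eq_bigr => y _.
  rewrite [in RHS](bigD1 i) //= {1}/w eqxx /=; case: ifP => Qyi; last by rewrite mul0r.
  rewrite [in LHS](bigD1 i) //=; congr (_ * _).
  by apply: eq_bigr => j ji; rewrite /w (negbTE ji).
rewrite -bigA_distr_bigA (bigD1 i) //= [X in _ * X]big1 ?mulr1 => [|j ji].
  by rewrite [in RHS]big_mkcond; apply: eq_bigr => v _; rewrite /w eqxx; case: (Q v).
by rewrite -(bern_sum j); apply: eq_bigr => v _; rewrite /w (negbTE ji).
Qed.

Definition bias_margin (R : realFieldType) (g : R) : R := g / (1 + g) ^+ 2.

Lemma bias_margin_gt0 (R : realFieldType) (g : R) : 0 < g -> 0 < bias_margin g.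
Proof. by move=> g0; rewrite divr_gt0 ?exprn_gt0 ?ltr_wpDl // ltW. Qed.

Lemma bias_margin_le1 (R : realFieldType) (g : R) : 0 < g -> bias_margin g <= 1.
Proof.
by move=> g0; rewrite ler_pdivrMr ?exprn_gt0 ?ltr_wpDl ?ltW // mul1r expr2; nra.
Qed.

Lemma fbias_margin (R : realType) (g m a : R) : 0 < g -> 0 <= a -> a <= m <= 1 - a ->
  bias_margin g * a <= fbias m g <= 1 - bias_margin g * a.
Proof.
move=> g0 a0 /andP[am ma].
set D := 1 + (g - 1) * m.
have D0 : 0 < D by rewrite /D; nra.
have Dg : D <= 1 + g by rewrite /D; nra.
set k := g / (1 + g).
have k1 : k <= 1 by rewrite /k ler_pdivrMr ?mul1r; lra.
have kg : k <= g by rewrite /k ler_pdivrMr ?ler_peMr; lra.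
have g1 : 0 < 1 + g by lra.
have kD : bias_margin g * D <= k.
  have -> : bias_margin g * D = k * (D / (1 + g)).
    by rewrite /k /bias_margin; field; rewrite gt_eqF.
  by rewrite ler_piMr ?ler_pdivrMr ?mul1r // divr_ge0 // ltW.
rewrite /fbias -/D; apply/andP; split.
  rewrite ler_pdivlMr // mulrAC; nra.
have : bias_margin g * a <= (1 - m) / D by rewrite ler_pdivlMr // mulrAC; nra.
suff -> : (1 - m) / D = 1 - g * m / D by lra.
by rewrite /D; field; rewrite -/D gt_eqF.
Qed.

Lemma beta_seq_margin (R : realType) (n : nat) (b1 : 'I_n -> R) (lo : R)
    (x : nat -> 'I_n -> bool) (k : nat) (j : 'I_n) :
  (forall j, lo <= b1 j <= 1 - lo) ->
  lo / k.+1%:R <= beta_seq b1 x k j <= 1 - lo / k.+1%:R.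
Proof.
move=> b1_lo; elim: k => [|k]; first by rewrite divr1 b1_lo.
set r := beta_seq b1 x k j; set u : R := k.+1%:R; set e : R := (x k.+2 j)%:R.
have u0 : 0 < u by rewrite ltr0n.
have e01 : 0 <= e <= 1 by rewrite /e; case: (x k.+2 j); rewrite /= ?lexx ?ler01.
move=> /andP[lo_r r_lo] /=; rewrite -/r -/e -/u.
have -> : k.+2%:R = u + 1 :> R by rewrite -natr1.
have -> : u / (u + 1) * r + (u + 1)^-1 * e = (u * r + e) / (u + 1).
  by field; rewrite gt_eqF ?ltr_wpDl.
have -> : 1 - lo / (u + 1) = (u + 1 - lo) / (u + 1) by field; rewrite gt_eqF ?ltr_wpDl.
rewrite !ler_pM2r ?invr_gt0 ?ltr_wpDl //.
have ur1 : lo <= u * r by rewrite mulrC -ler_pdivrMr.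
have : u * r <= u * (1 - lo / u) by rewrite ler_wpM2l // ltW.
rewrite mulrBr mulr1 mulrCA mulfV ?gt_eqF // mulr1 => ur2.
case/andP: e01 => e0 e1; apply/andP; split; lra.
Qed.

Lemma mu_bounded (R : realType) (n : nat) (A : 'M[R]_n) (b : 'I_n -> R)
    (i : 'I_n) (lo hi : R) :
  0 < deg A i -> (forall j, 0 <= A i j) -> (forall j, lo <= b j <= hi) ->
  lo <= mu A b i <= hi.
Proof.
move=> deg0 Ai0 b_in.
have avg c : (deg A i)^-1 * \sum_j A i j * c = c.
  by rewrite -big_distrl /= -/(deg A i) mulrA mulVf ?mul1r ?gt_eqF.
rewrite /mu; apply/andP; split; [rewrite -{1}(avg lo) | rewrite -{1}(avg hi)];
  rewrite ler_wpM2l ?invr_ge0 ?(ltW deg0) //; apply: ler_sum => j _;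
  by rewrite ler_wpM2l //; case/andP: (b_in j).
Qed.

Lemma deg_gt0 (R : realType) (n : nat) (A : 'M[R]_n) (i : 'I_n) :
  (forall i j, 0 <= A i j) -> graph_connected A -> ~ graph_bipartite A ->
  0 < deg A i.
Proof.
move=> A0 connA nbipA.
have [u [v uv]] : exists u v, 0 < A u v.
  apply/not_existsP => no_edge; apply: nbipA; exists (fun=> true) => u v uv.
  by case: (no_edge u); exists v.
have [j ij] : exists j, 0 < A i j.
  by case/connectP: (connA i u) => -[/= _ <-|w p /= /andP[iw _] _]; [exists v|exists w].
by rewrite /deg (bigD1 j) //= ltr_pwDl // sumr_ge0.
Qed.

Lemma beta_seq_eq (R : realType) (n : nat) (b1 : 'I_n -> R)
    (x x' : nat -> 'I_n -> bool) (t : nat) :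
  (forall k j, (k < t)%N -> x k.+2 j = x' k.+2 j) ->
  beta_seq b1 x t = beta_seq b1 x' t.
Proof.
elim: t => [//|t IH] xx' /=; rewrite IH => [|k j kt]; last exact/xx'/ltnW.
by apply: funext => j; rewrite xx'.
Qed.

Definition extend (n : nat) (x : nat -> 'I_n -> bool) (t : nat) (y : 'I_n -> bool) :
  nat -> 'I_n -> bool := fun s j => if s == t.+2 then y j else x s j.

Section Model.
Variables (R : realType) (n : nat) (A : 'M[R]_n) (gamma b1 : 'I_n -> R).

Definition decl_prob (x : nat -> 'I_n -> bool) (t : nat) (j : 'I_n) : R :=
  fbias (mu A (beta_seq b1 x t) j) (gamma j).

Definition path_prob (x : nat -> 'I_n -> bool) (t : nat) : R :=
  \prod_(k < t) step_prob A gamma b1 x k.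

Lemma path_prob_extend x t y :
  path_prob (extend x t y) t.+1 = path_prob x t * \prod_j bern (decl_prob x t j) (y j).
Proof.
have ext_lt k : (k <= t)%N -> beta_seq b1 (extend x t y) k = beta_seq b1 x k.
  move=> kt; apply: beta_seq_eq => k' j k'k.
  by rewrite /extend !eqSS ltn_eqF // (leq_trans k'k kt).
rewrite /path_prob big_ord_recr /=; congr (_ * _).
  apply: eq_bigr => k _; rewrite /step_prob ext_lt 1?ltnW //.
  by apply: eq_bigr => j _; rewrite /extend !eqSS ltn_eqF.
by apply: eq_bigr => j _; rewrite ext_lt // /extend eqxx.
Qed.

Lemma bern_decl_prob_le x t i v lo :
  (forall j, 0 <= A i j) -> 0 < deg A i -> 0 < gamma i -> 0 <= lo ->
  (forall j, lo <= b1 j <= 1 - lo) ->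
  bern (decl_prob x t i) v <= 1 - bias_margin (gamma i) * lo / t.+1%:R.
Proof.
move=> Ai0 deg0 g0 lo0 b1_lo; apply: bern_le; rewrite -mulrA.
apply: fbias_margin => //; first by rewrite divr_ge0.
by apply: mu_bounded => // j; apply: beta_seq_margin.
Qed.

End Model.

Section MeasurableSets.
Context d (T : measurableType d).

Lemma measurable_forall_nat (S : nat -> T -> Prop) :
  (forall k, measurable [set w | S k w]) -> measurable [set w | forall k, S k w].
Proof.
move=> mS; rewrite [X in measurable X](_ : _ = \bigcap_k [set w | S k w]).
  exact: bigcapT_measurable.
by apply/seteqP; split=> w /= Sw k; [move=> _|]; apply: Sw.
Qed.

Lemma measurable_forall_fin (I : finType) (S : I -> T -> Prop) :
  (forall k, measurable [set w | S k w]) -> measurable [set w | forall k, S k w].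
Proof.
move=> mS; rewrite [X in measurable X](_ : _ = \bigcap_(k in [set: I]) [set w | S k w]).
  exact: fin_bigcap_measurable finite_finset _.
by apply/seteqP; split=> w /= Sw k; [move=> _|]; apply: Sw.
Qed.

Lemma measurable_implies (b : bool) (S : set T) :
  measurable S -> measurable [set w | b -> S w].
Proof.
case: b => mS; last by rewrite [X in measurable X](_ : _ = setT) //; apply/seteqP.
by rewrite [X in measurable X](_ : _ = S) //; apply/seteqP; split => w /=; auto.
Qed.

Lemma measurable_eqb (f : T -> bool) (v : bool) :
  measurable [set w | f w] -> measurable [set w | f w = v].
Proof.
case: v => // mf; rewrite [X in measurable X](_ : _ = ~` [set w | f w]).
  exact: measurableC.
by apply/seteqP; split => w /=; case: (f w).
Qed.

End MeasurableSets.

Lemma measure_le_sum_cover d (T : measurableType d) (R : realType)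
    (mu : {measure set T -> \bar R}) (I : finType) (D : pred I)
    (A : set T) (F : I -> set T) :
  measurable A -> (forall i, D i -> measurable (F i)) ->
  A `<=` \bigcup_(i in [set i | D i]) F i ->
  (mu A <= \sum_(i | D i) mu (F i))%E.
Proof.
move=> mA mF AF; rewrite bigfs ?index_enum_uniq // => [|i _].
  exact: content_sub_fsum finite_finset mF mA AF.
by rewrite mem_index_enum.
Qed.

Section Process.
Variables (R : realType) (n : nat) (A : 'M[R]_n) (gamma b1 : 'I_n -> R).
Variables (d : measure_display) (T : measurableType d) (P : probability T R).
Variable psi : nat -> 'I_n -> T -> bool.
Hypothesis psi_meas : forall t i, measurable [set w | psi t i w].

Definition cylinder (t : nat) (x : nat -> 'I_n -> bool) : set T :=
  [set w | forall k i, (k < t)%N -> psi k.+2 i w = x k.+2 i].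

Hypothesis psi_law : forall t x, P (cylinder t x) = (path_prob A gamma b1 x t)%:E.

Lemma measurable_cylinder t x : measurable (cylinder t x).
Proof.
apply: measurable_forall_nat => k; apply: measurable_forall_fin => j.
exact/measurable_implies/measurable_eqb.
Qed.

Lemma path_prob_ge0 t x : 0 <= path_prob A gamma b1 x t.
Proof. by rewrite -lee_fin -psi_law. Qed.

Definition stuck_from (i : 'I_n) (b : bool) (N : nat) : set T :=
  [set w | forall t, (N <= t)%N -> psi t i w = b].

Lemma measurable_stuck_from i b N : measurable (stuck_from i b N).
Proof.
by apply: measurable_forall_nat => t; apply/measurable_implies/measurable_eqb.
Qed.

Section Stay.
Variables (i : 'I_n) (b : bool) (N : nat) (c : R).
Hypothesis c01 : 0 < c <= 1.
Hypothesis decl_le : forall x t, bern (decl_prob A gamma b1 x t i) b <= 1 - c / t.+1%:R.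

Definition stay (t m : nat) : set T :=
  [set w | forall s, (s < m)%N -> (N <= t + s)%N -> psi (t + s).+2 i w = b].

Definition stay_bound (s : nat) : R := if (N <= s)%N then 1 - c / s.+1%:R else 1.

Lemma measurable_stay t m : measurable (stay t m).
Proof.
apply: measurable_forall_nat => s.
exact/measurable_implies/measurable_implies/measurable_eqb.
Qed.

Lemma stay_bound_ge0 s : 0 <= stay_bound s.
Proof.
rewrite /stay_bound; case: ifP => // _; rewrite subr_ge0 ler_pdivrMr ?ltr0n // mul1r.
by case/andP: c01 => _ /le_trans; apply; rewrite ler1n.
Qed.

Lemma cylinder_stay_cover t x m :
  cylinder t x `&` stay t m.+1 `<=`
  \bigcup_(y in [set y : {ffun 'I_n -> bool} | (N <= t)%N ==> (y i == b)])
    (cylinder t.+1 (extend x t y) `&` stay t.+1 m).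
Proof.
move=> w [xw sw]; exists [ffun j => psi t.+2 j w]; rewrite /= ?ffunE.
  by apply/implyP => Nt; rewrite -[t]addn0 sw ?addn0.
split=> [k j | s sm Ns]; last by rewrite addSnnS sw // -addSnnS.
rewrite ltnS leq_eqVlt /extend eqSS => /orP[/eqP -> | kt]; first by rewrite eqxx ffunE.
by rewrite ltn_eqF // xw.
Qed.

Lemma measure_cylinder_stay_le m : forall t x,
  (P (cylinder t x `&` stay t m) <=
   (path_prob A gamma b1 x t * \prod_(s < m) stay_bound (t + s))%:E)%E.
Proof.
elim: m => [|m IH] t x.
  rewrite big_ord0 mulr1 -psi_law; apply: le_measure; rewrite ?inE //.
    exact: measurableI (measurable_cylinder _ _) (measurable_stay _ _).
  exact: measurable_cylinder.
have m_cs t' x' m' : measurable (cylinder t' x' `&` stay t' m').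
  exact: measurableI (measurable_cylinder _ _) (measurable_stay _ _).
apply: le_trans (measure_le_sum_cover P (m_cs _ _ _) (fun y _ => m_cs _ _ _)
  (@cylinder_stay_cover t x m)) _.
set Pi := \prod_(s < m) stay_bound (t.+1 + s).
apply: (@le_trans _ _ (\sum_(y : {ffun 'I_n -> bool} | (N <= t)%N ==> (y i == b))
    (path_prob A gamma b1 (extend x t y) t.+1 * Pi)%:E)%E).
  by apply: lee_sum => y _; exact: IH.
rewrite sumEFin lee_fin big_ord_recl addn0.
under eq_bigr do rewrite path_prob_extend mulrAC.
have -> : \prod_(s < m) stay_bound (t + lift ord0 s) = Pi.
  by apply: eq_bigr => s _; rewrite lift0 addnS.
rewrite -big_distrr /=.
rewrite (@sum_prod_bern_marginal _ _ _ i (fun v => (N <= t)%N ==> (v == b))).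
rewrite [stay_bound t * Pi]mulrC mulrA.
have Pi0 : 0 <= Pi by apply: prodr_ge0 => s _; exact: stay_bound_ge0.
rewrite ler_wpM2l ?mulr_ge0 ?path_prob_ge0 //.
rewrite /stay_bound; case: (N <= t)%N => /=; first by rewrite big_pred1_eq decl_le.
by rewrite big_bool /=; lra.
Qed.

Lemma prod_stay_bound M : (N <= M)%N ->
  \prod_(s < M) stay_bound s = \prod_(N <= s < M) (1 - c / s.+1%:R).
Proof.
move=> NM; rewrite -(big_mkord xpredT) (big_cat_nat (leq0n N) NM) /=.
rewrite big_nat_cond big1 ?mul1r => [|s /andP[/andP[_ sN] _]].
  by apply: eq_big_nat => s /andP[Ns _]; rewrite /stay_bound Ns.
by rewrite /stay_bound leqNgt sN.
Qed.

Lemma measure_stuck_from : P (stuck_from i b N) = 0%E.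
Proof.
have B_le M : (N <= M)%N ->
    (P (stuck_from i b N) <= (\prod_(N <= s < M) (1 - c / s.+1%:R))%:E)%E.
  move=> NM; pose x0 (_ : nat) (_ : 'I_n) := true.
  have := measure_cylinder_stay_le M 0 x0; rewrite /path_prob big_ord0 mul1r.
  rewrite prod_stay_bound //; apply: le_trans; apply: le_measure; rewrite ?inE //.
  - exact: measurable_stuck_from.
  - exact: measurableI (measurable_cylinder _ _) (measurable_stay _ _).
  move=> w Bw; split=> [k j | s _ Ns]; first by rewrite ltn0.
  by apply: Bw; rewrite (leq_trans Ns) // leqW.
have PB_fin : P (stuck_from i b N) \is a fin_num.
  exact/fin_num_measure/measurable_stuck_from.
rewrite -(fineK PB_fin); congr (_%:E).
apply: harmonic_prod_bound_eq0 c01 _ _ => [|M NM]; first exact/fine_ge0/measure_ge0.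
by rewrite -lee_fin fineK //; apply: B_le.
Qed.

End Stay.
End Process.

Theorem lemma2 (R : realType) (n : nat) (A : 'M[R]_n)
  (gamma : 'I_n -> R) (b1 : 'I_n -> R)
  (d : measure_display) (T : measurableType d) (P : probability T R)
  (psi : nat -> 'I_n -> T -> bool) :
  (forall i j, A i j = A j i) ->
  (forall i j, 0 <= A i j) ->
  graph_connected A ->
  ~ graph_bipartite A ->
  (forall i, 0 < gamma i) ->
  (exists i, gamma i != 1) ->
  (forall i, 0 < b1 i < 1) ->
  (forall t i, measurable [set w | psi t i w]) ->
  (* law of the declarations: for every horizon t and every declaration path x,
     P(psi_s = x_s for 2 <= s <= t+1) = product of the conditional
     Bernoulli probabilities f(mu_i(beta(s)), gamma_i) *)
  (forall (t : nat) (x : nat -> 'I_n -> bool),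
      P [set w | forall k i, (k < t)%N -> psi k.+2 i w = x k.+2 i]
      = (\prod_(k < t) step_prob A gamma b1 x k)%:E) ->
  forall i : 'I_n,
    {ae P, forall w,
        (forall N, exists2 t, (N <= t)%N & psi t i w = false) /\
        (forall N, exists2 t, (N <= t)%N & psi t i w = true)}.
Proof.
move=> _ A0 connA nbipA gamma0 _ b1_01 psi_meas psi_law i.
have [lo lo0 b1_lo] := exists_margin b1_01.
have c01 : 0 < bias_margin (gamma i) * lo <= 1.
  have g0 := gamma0 i; have /andP[lo_b1 b1_lo1] := b1_lo i.
  rewrite mulr_gt0 ?bias_margin_gt0 //= mulr_ile1 ?bias_margin_le1 ?(ltW lo0) //.
    exact/ltW/bias_margin_gt0.
  lra.
have stuck0 b N : P.-negligible (stuck_from psi i b N).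
  exists (stuck_from psi i b N); split => //; first exact: measurable_stuck_from.
  apply: (measure_stuck_from psi_meas psi_law N c01) => x t.
  exact: (bern_decl_prob_le x t b (A0 i) (deg_gt0 i A0 connA nbipA) (gamma0 i)
    (ltW lo0) b1_lo).
apply: negligibleS
  (negligible_bigcup (fun N => negligibleU (stuck0 true N) (stuck0 false N))).
move=> w /= /not_andP[] /existsNP[N not_io]; exists N => //; [left | right] => t Nt;
  by case E : (psi t i w) => //; case: not_io; exists t.
Qed.
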